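(* Let $Q$ be a $\Sigma$-uniformized query with hypergraph $\mathcal{H}=(V,E)$, input size $n$, $p$ machines, let $\Delta>0$, let $\psi$ be the vector returned by Construct$(Q,\Delta)$, and let $\mathbf{v}=\mathbf{V}(\psi)/\Delta$ (a consistent vertex weight mapping). Let $\mathcal{U}=\{(U,R): R\in Q,\ U\subseteq\mathrm{vars}(R),\ U\text{ heavy in }R\}$, $H=H[\mathbf{v}]=\bigcup_{(U,R)\in\mathcal{U}}U$, and define the heavy relation $R_H=\bowtie_{(U,R)\in\mathcal{U}}\pi_U(R)$ (with variables $H$). Then for every $X\subseteq H$, $\deg_{R_H}(H\mid X)\le 2^{|H|}p^{\sum_{i\in H\setminus X}v_i}$.
   Context: A natural join query $Q$ is a set of relations (distinct schemas) with hypergraph $\mathcal{H}=(V,E)$, $V=\bigcup_R\mathrm{vars}(R)$, $E=\{\mathrm{vars}(R)\}$. $\mathcal{H}[S]$ has vertex set $S$ and edges $\{S\cap e: e\in E, S\cap e\ne\emptyset\}$; $\mathsf{red}$ removes every edge strictly contained in another. $\deg_R(Y\mid X)=\max_{\mathbf{x}}|\pi_Y\sigma_{X=\mathbf{x}}R|$. A constraint set for $R$ is $\sigma_R:\mathcal{P}(\mathrm{vars}(R))\to\mathbb{R}_{\ge0}$; $R$ satisfies it if $\deg_R(Y\mid X)\le2\sigma_R(X)/\sigma_R(Y)$ for all $X\subseteq Y\subseteq\mathrm{vars}(R)$; $Q$ is $\Sigma$-uniformized ($\Sigma=\{\sigma_R\}_{R\in Q}$) if each $R$ satisfies $\sigma_R$.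 A vertex weight mapping is $\mathbf{v}:V\to\mathbb{R}_{\ge0}$. For $R\in Q$ and $U\subseteq\mathrm{vars}(R)$: $U$ is heavy in $R$ if $\sigma_R(U)\ge n/p^{\sum_{i\in U}v_i}$, consistent if $\sigma_R(U)\le n/p^{\sum_{i\in U}v_i}$. $\mathbf{v}$ is consistent with $Q$ if every $U\subseteq\mathrm{vars}(R)$ is consistent in $R$ for every $R\in Q$. $H[\mathbf{v}]$ is the union of all sets $U$ heavy in some $R\in Q$. For each $U\subseteq V$ fix a minimum fractional vertex cover $\mathbf{v}^*_U$ of $\mathsf{red}(\mathcal{H}[U])$ (zero outside $U$). For $\psi=(\psi_U)_{U\in\mathcal{P}(V)}$, $\mathbf{V}(\psi)=\sum_U\psi_U\mathbf{v}^*_U$ and $|\psi|_1=\sum_U\psi_U$. Construct$(Q,\Delta)$: set $\psi\gets\mathbf{0}$; while $|\psi|_1<1$ and $H[\mathbf{V}(\psi)/\Delta]\ne V$: let $L=V\setminus H[\mathbf{V}(\psi)/\Delta]$ and set $\psi_L$ to the largest $\delta\in(0,1-|\psi|_1]$ such that $Q$ is consistent with $(\mathbf{V}(\psi)+\delta\mathbf{v}^*_L)/\Delta$; return $\psi$. *)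

From HB Require Import structures.
From mathcomp Require Import all_boot all_order all_algebra.
From mathcomp Require Import reals exp.
Set Implicit Arguments. Unset Strict Implicit. Unset Printing Implicit Defensive.
Import Order.TTheory GRing.Theory Num.Theory.
Local Open Scope ring_scope.

Section Defs.
Variables (V : finType) (D : eqType).

(* A tuple assigns values to (some) attributes; None = attribute absent. *)
Definition tuple := {ffun V -> option D}.

Definition relation := ({set V} * seq tuple)%type.
Definition rvars (R0 : relation) : {set V} := R0.1.
Definition rtuples (R0 : relation) : seq tuple := R0.2.

Definition wf_relation (R0 : relation) :=
  forall t, t \in rtuples R0 -> forall i, (t i != None) = (i \in rvars R0).

(* A query: a list of well-formed relations with pairwise distinct schemas,
   whose hypergraph has vertex set V = union of the schemas (V is the type). *)
Definition is_query (Q : seq relation) :=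
  [/\ uniq (map rvars Q), (forall R0, R0 \in Q -> wf_relation R0)
    & forall i : V, exists2 R0, R0 \in Q & i \in rvars R0].

Definition restr (Y : {set V}) (t : tuple) : tuple :=
  [ffun i => if i \in Y then t i else None].

Definition proj (Y : {set V}) (r : seq tuple) : seq tuple :=
  undup (map (restr Y) r).

Definition deg (r : seq tuple) (Y X : {set V}) : nat :=
  \max_(t <- r) size (proj Y [seq t' <- r | restr X t' == restr X t]).

Definition rsize (R0 : relation) : nat := size (undup (rtuples R0)).

Definition input_size (Q : seq relation) : nat := \sum_(R0 <- Q) rsize R0.

Definition compatible (t1 t2 : tuple) :=
  [forall i, [|| t1 i == None, t2 i == None | t1 i == t2 i]].
Definition merge (t1 t2 : tuple) : tuple :=
  [ffun i => if t1 i is Some a then Some a else t2 i].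
Definition join2 (r1 r2 : seq tuple) : seq tuple :=
  undup [seq merge t1 t2 | t1 <- r1, t2 <- [seq t2 <- r2 | compatible t1 t2]].
Definition join (rs : seq (seq tuple)) : seq tuple :=
  foldr join2 [:: [ffun => None]] rs.

Variable R : realType.

(* R satisfies the constraint set sigma_R (denominators cleared) *)
Definition satisfies (R0 : relation) (sR : {set V} -> R) :=
  (forall U : {set V}, U \subset rvars R0 -> 0 <= sR U) /\
  forall X Y : {set V}, X \subset Y -> Y \subset rvars R0 ->
    (deg (rtuples R0) Y X)%:R * sR Y <= 2 * sR X.

Definition uniformized (Q : seq relation) (sigma : relation -> {set V} -> R) :=
  forall R0, R0 \in Q -> satisfies R0 (sigma R0).

Section Weights.
Variables (Q : seq relation) (sigma : relation -> {set V} -> R) (p : nat).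

Definition wsum (v : V -> R) (U : {set V}) : R := \sum_(i in U) v i.

Definition threshold (v : V -> R) (U : {set V}) : R :=
  (input_size Q)%:R / (p%:R `^ wsum v U).

Definition heavy (v : V -> R) (R0 : relation) (U : {set V}) : bool :=
  threshold v U <= sigma R0 U.
Definition consistent_set (v : V -> R) (R0 : relation) (U : {set V}) :=
  sigma R0 U <= threshold v U.

Definition consistent (v : V -> R) :=
  (forall i, 0 <= v i) /\
  forall R0, R0 \in Q -> forall U : {set V}, U \subset rvars R0 -> consistent_set v R0 U.

Definition heavy_pairs (v : V -> R) : seq ({set V} * relation) :=
  [seq (U, R0) | R0 <- Q,
     U <- [seq U <- enum (powerset (rvars R0)) | heavy v R0 U ]].

Definition heavy_set (v : V -> R) : {set V} :=
  \bigcup_(P <- heavy_pairs v) P.1.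

Definition heavy_relation (v : V -> R) : seq tuple :=
  join [seq proj P.1 (rtuples P.2) | P <- heavy_pairs v].

Definition edges : {set {set V}} := [set e | e \in map rvars Q].
Definition induced (S : {set V}) : {set {set V}} :=
  [set S :&: e | e in edges & S :&: e != set0].
Definition red (F : {set {set V}}) : {set {set V}} :=
  [set f in F | ~~ [exists g in F, f \proper g]].

Definition frac_cover (F : {set {set V}}) (w : V -> R) :=
  (forall i, 0 <= w i) /\ forall f : {set V}, f \in F -> 1 <= \sum_(i in f) w i.
Definition min_frac_cover (S : {set V}) (F : {set {set V}}) (w : V -> R) :=
  frac_cover F w /\
  forall w', frac_cover F w' -> \sum_(i in S) w i <= \sum_(i in S) w' i.

Definition vstar_spec (vstar : {set V} -> V -> R) :=
  forall U, min_frac_cover U (red (induced U)) (vstar U) /\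
            forall i, i \notin U -> vstar U i = 0.

Variables (Delta : R) (vstar : {set V} -> V -> R).

Definition Vpsi (psi : {set V} -> R) : V -> R :=
  fun i => \sum_(U : {set V}) psi U * vstar U i.
Definition norm1 (psi : {set V} -> R) : R := \sum_(U : {set V}) psi U.
Definition scaled (psi : {set V} -> R) : V -> R := fun i => Vpsi psi i / Delta.

Definition loop_cond (psi : {set V} -> R) :=
  norm1 psi < 1 /\ heavy_set (scaled psi) != setT.

Definition light (psi : {set V} -> R) : {set V} := ~: heavy_set (scaled psi).

Definition largest_delta (psi : {set V} -> R) (delta : R) :=
  let ok d := [/\ 0 < d, d <= 1 - norm1 psi &
     consistent (fun i => (Vpsi psi i + d * vstar (light psi) i) / Delta)] in
  ok delta /\ forall d, ok d -> d <= delta.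

Definition update (psi : {set V} -> R) (L : {set V}) (d : R) : {set V} -> R :=
  fun U => if U == L then d else psi U.

(* Operational semantics of the while loop: run_from psi res means that the
   loop started in state psi terminates with returned value res. *)
Inductive run_from : ({set V} -> R) -> ({set V} -> R) -> Prop :=
| run_stop psi : ~ loop_cond psi -> run_from psi psi
| run_step psi delta res : loop_cond psi -> largest_delta psi delta ->
    run_from (update psi (light psi) delta) res -> run_from psi res.

Definition construct_returns (psi : {set V} -> R) := run_from (fun _ => 0) psi.

End Weights.
End Defs.

From Pilot Require Import Defs.
From HB Require Import structures.
From mathcomp Require Import all_boot all_order all_algebra.
From mathcomp Require Import reals exp.
Set Implicit Arguments. Unset Strict Implicit. Unset Printing Implicit Defensive.
Import Order.TTheory GRing.Theory Num.Theory.
Local Open Scope ring_scope.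

(* Count the distinct H-projections of tuples of R_H that agree on a set Y,
   by induction on |H \ Y|.  An attribute i of H \ Y lies in some U heavy in
   some R; the tuples split according to their U-projection into at most
   deg_R(U | U ∩ Y) groups, and each group agrees on Y ∪ U.  Uniformization
   bounds this degree by 2 sigma_R(U ∩ Y) / sigma_R(U), and the heavy threshold
   for U together with the consistency bound for U ∩ Y turn this into
   2 p^(v(U \ Y)).  The factors multiply up to 2^|H \ X| p^(v(H \ X)). *)

Section Tuples.
Variables (V : finType) (D : eqType).
Local Notation tuple := (Defs.tuple V D).
Implicit Types (A B S U X Y : {set V}) (t u : tuple) (r s : seq tuple).

Definition agree_on X s :=
  forall t1 t2, t1 \in s -> t2 \in s -> restr X t1 = restr X t2.

Definition has_schema S r :=
  forall u, u \in r -> forall i, (u i != None) = (i \in S).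

Lemma eq_restr_sub A B t1 t2 :
  A \subset B -> restr B t1 = restr B t2 -> restr A t1 = restr A t2.
Proof.
move=> sAB /ffunP eB; apply/ffunP => i; rewrite !ffunE.
by case: ifP => // iA; have := eB i; rewrite !ffunE (subsetP sAB i iA).
Qed.

Lemma eq_restrU A B t1 t2 :
  restr A t1 = restr A t2 -> restr B t1 = restr B t2 ->
  restr (A :|: B) t1 = restr (A :|: B) t2.
Proof.
move=> /ffunP eA /ffunP eB; apply/ffunP => i; move: (eA i) (eB i).
by rewrite !ffunE inE; case: (i \in A); case: (i \in B).
Qed.

Lemma projP U r u : reflect (exists2 t, t \in r & u = restr U t) (u \in proj U r).
Proof. by rewrite mem_undup; apply: mapP. Qed.

Lemma sub_agree_on A B s s' :
  A \subset B -> {subset s' <= s} -> agree_on B s -> agree_on A s'.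
Proof.
by move=> sAB ss' hs t1 t2 /ss' t1s /ss' t2s; apply: eq_restr_sub (hs _ _ t1s t2s).
Qed.

Lemma size_proj_agree X s : agree_on X s -> (size (proj X s) <= 1)%N.
Proof.
case: s => [|t0 s] hs //; apply: (@uniq_leq_size _ _ [:: restr X t0]).
  exact: undup_uniq.
by move=> _ /projP [t ts ->]; rewrite inE (hs t t0 ts (mem_head _ _)).
Qed.

Definition proj_class U s u := [seq t <- s | restr U t == u].

Lemma proj_class_sub U s u : {subset proj_class U s u <= s}.
Proof. by move=> t; rewrite mem_filter => /andP []. Qed.

Lemma agree_on_proj_class U s u : agree_on U (proj_class U s u).
Proof. by move=> t1 t2; rewrite !mem_filter => /andP [/eqP -> _] /andP [/eqP -> _]. Qed.

Lemma agree_onU A B s : agree_on A s -> agree_on B s -> agree_on (A :|: B) s.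
Proof. by move=> hA hB t1 t2 t1s t2s; apply: eq_restrU; [apply: hA | apply: hB]. Qed.

Lemma size_proj_partition U Y s :
  (size (proj Y s) <= \sum_(u <- proj U s) size (proj Y (proj_class U s u)))%N.
Proof.
have -> : \sum_(u <- proj U s) size (proj Y (proj_class U s u)) =
    size (flatten [seq proj Y (proj_class U s u) | u <- proj U s]).
  by rewrite size_flatten /shape -map_comp sumnE big_map.
apply: uniq_leq_size; first exact: undup_uniq.
move=> _ /projP [t ts ->]; apply/flatten_mapP; exists (restr U t).
  by apply/projP; exists t.
by apply/projP; exists t; rewrite // mem_filter eqxx.
Qed.

Lemma proj_schema S U r : has_schema S r -> U \subset S -> has_schema U (proj U r).
Proof.
move=> hr sUS _ /projP [t tr ->] i; rewrite ffunE.
by case: ifP => // iU; rewrite (hr t tr) (subsetP sUS i iU).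
Qed.

Lemma restr_merge_l U t1 t2 :
  (forall i, (t1 i != None) = (i \in U)) -> restr U (Defs.merge t1 t2) = t1.
Proof.
move=> h1; apply/ffunP => i; rewrite !ffunE; move: (h1 i).
by case: (i \in U); case: (t1 i).
Qed.

Lemma restr_merge_r U t1 t2 :
  compatible t1 t2 -> (forall i, i \in U -> t2 i != None) ->
  restr U (Defs.merge t1 t2) = restr U t2.
Proof.
move=> /forallP c12 h2; apply/ffunP => i; rewrite !ffunE.
case: ifP => // /h2; move: (c12 i).
by case: (t1 i) => [a|]; case: (t2 i) => [b|] //= /eqP [->].
Qed.

Lemma mem_join_restr (rs : seq ({set V} * seq tuple)) t :
  (forall P, P \in rs -> has_schema P.1 P.2) ->
  t \in join (map snd rs) -> forall P, P \in rs -> restr P.1 t \in P.2.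
Proof.
elim: rs t => [|P0 rs IH] t //= hrs.
rewrite /join2 mem_undup => /allpairsPdep [t1 [t2 [t1P0]]].
rewrite mem_filter => /andP [c12 t2rs] -> P; rewrite inE => /predU1P [->|Prs].
  by rewrite restr_merge_l //; apply: hrs (mem_head _ _) _ t1P0.
have hrs' P' : P' \in rs -> has_schema P'.1 P'.2.
  by move=> P'rs; apply: hrs; rewrite inE P'rs orbT.
have t2P := IH t2 hrs' t2rs P Prs.
rewrite restr_merge_r // => i iP.
by have := hrs' P Prs _ t2P i; rewrite iP ffunE iP.
Qed.

Lemma size_proj_le_deg r U X s t0 :
  X \subset U -> t0 \in s -> agree_on X s ->
  (forall t, t \in s -> restr U t \in proj U r) ->
  (size (proj U s) <= deg r U X)%N.
Proof.
move=> sXU t0s hs hr; have /projP [r0 r0r e0] := hr t0 t0s.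
apply: leq_trans (leq_bigmax_seq _ r0r isT); apply: uniq_leq_size.
  exact: undup_uniq.
move=> _ /projP [t ts ->]; have /projP [r1 r1r e1] := hr t ts.
apply/projP; exists r1 => //; rewrite mem_filter r1r andbT; apply/eqP.
rewrite -(eq_restr_sub sXU e1) -(eq_restr_sub sXU e0); exact: hs.
Qed.

Lemma natr_deg_le (R : numDomainType) r Y X (B : R) : 0 <= B ->
  (forall t, t \in r -> (size (proj Y (proj_class X r (restr X t))))%:R <= B) ->
  (deg r Y X)%:R <= B.
Proof.
move=> B0 hr; rewrite /deg big_seq; elim/big_rec: _ => // t k tr hk.
by rewrite /maxn; case: ifP => _ //; apply: hr.
Qed.

Lemma size_proj_le_mul (R : numDomainType) U Y s (B : R) :
  (forall u, (size (proj Y (proj_class U s u)))%:R <= B) ->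
  (size (proj Y s))%:R <= (size (proj U s))%:R * B.
Proof.
move=> hB; pose F u := size (proj Y (proj_class U s u)).
apply: le_trans (_ : (\sum_(u <- proj U s) F u)%:R <= _).
  by rewrite ler_nat size_proj_partition.
rewrite natr_sum; apply: le_trans (ler_sum _ (fun u _ => hB u)) _.
by rewrite big_const_seq count_predT iter_addr_0 mulr_natl.
Qed.

Lemma input_size_gt0 (Q : seq (relation V D)) R0 :
  R0 \in Q -> rtuples R0 != [::] -> (0 < input_size Q)%N.
Proof.
move=> R0Q ne; rewrite /input_size (big_rem _ R0Q) /= ltn_addr //.
rewrite /rsize -has_predT; case: (rtuples R0) ne => [//|t0 r0 _].
by apply/hasP; exists t0; rewrite ?mem_undup ?mem_head.
Qed.

Lemma bigcup_seqP (T : eqType) (L : seq T) (F : T -> {set V}) i :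
  reflect (exists2 x, x \in L & i \in F x) (i \in \bigcup_(x <- L) F x).
Proof.
elim: L => [|x L IH]; first by rewrite big_nil inE; constructor; case.
rewrite big_cons inE; apply: (iffP orP) => [[iFx|/IH [y yL iFy]]|[y]].
- by exists x; rewrite ?mem_head.
- by exists y; rewrite // inE yL orbT.
- by rewrite inE => /predU1P [-> ->|yL iFy]; [left | right; apply/IH; exists y].
Qed.

Lemma bigcup_seq_sup (T : eqType) (L : seq T) (F : T -> {set V}) x :
  x \in L -> F x \subset \bigcup_(y <- L) F y.
Proof. by move=> xL; rewrite (big_rem _ xL) subsetUl. Qed.

End Tuples.

Lemma ler_mul_of_ratio (R : numFieldType) (d k c q s1 s2 : R) :
  0 < c -> 0 < q -> 0 <= d -> 0 <= k ->
  c / q <= s1 -> s2 <= c -> d * s1 <= k * s2 -> d <= k * q.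
Proof.
move=> c0 q0 d0 k0 hs1 hs2 hd.
have : d * (c / q) <= k * c.
  exact: le_trans (ler_wpM2l d0 hs1) (le_trans hd (ler_wpM2l k0 hs2)).
by rewrite mulrA ler_pdivrMr // mulrAC ler_pM2r.
Qed.

Section FanOut.
Variables (R : realType) (V : finType) (D : eqType).
Variables (H : {set V}) (r : seq (Defs.tuple V D)) (b : R) (v : V -> R).
Hypothesis b_gt0 : 0 < b.

Definition fan_out_bound (Z : {set V}) : R := 2 ^+ #|Z| * b `^ (\sum_(i in Z) v i).

Lemma fan_out_bound_ge0 Z : 0 <= fan_out_bound Z.
Proof. by rewrite mulr_ge0 ?exprn_ge0 ?powR_ge0. Qed.

Lemma fan_out_bound0 : fan_out_bound set0 = 1.
Proof. by rewrite /fan_out_bound cards0 big_set0 powRr0 mulr1. Qed.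

Lemma fan_out_boundID Z U :
  fan_out_bound Z = fan_out_bound (Z :&: U) * fan_out_bound (Z :\: U).
Proof.
rewrite /fan_out_bound -(cardsID U Z) (big_setID U) /= exprD.
by rewrite powRD ?(gt_eqF b_gt0) ?implybT // mulrACA.
Qed.

Definition local_fan_out := forall (Y : {set V}) i, i \in H :\: Y ->
  exists U : {set V}, [/\ i \in U, U \subset H &
    forall s : seq (Defs.tuple V D), {subset s <= r} -> agree_on Y s ->
      (size (proj U s))%:R <= 2 * b `^ (\sum_(j in U :\: Y) v j)].

Hypothesis local_bound : local_fan_out.

Lemma size_proj_fan_out Y s : {subset s <= r} -> agree_on Y s ->
  (size (proj H s))%:R <= fan_out_bound (H :\: Y).
Proof.
have [k] := ubnP #|H :\: Y|; elim: k Y s => // k IH Y s ltHY sr hs.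
have [HY0 | [i iHY]] := set_0Vmem (H :\: Y).
  rewrite HY0 fan_out_bound0 lern1; apply: size_proj_agree.
  by apply: sub_agree_on hs => //; rewrite -setD_eq0 HY0.
have [U [iU sUH hU]] := local_bound iHY.
have HYU : H :\: (Y :|: U) = (H :\: Y) :\: U by rewrite setDDl.
have UY : (H :\: Y) :&: U = U :\: Y by rewrite setIDAC (setIidPr sUH).
have IHU u :
    (size (proj H (proj_class U s u)))%:R <= fan_out_bound (H :\: (Y :|: U)).
  have su := proj_class_sub (U := U) (s := s) (u := u).
  apply: IH.
  - apply: leq_trans (ltHY : (#|H :\: Y| <= k)%N); rewrite HYU.
    apply: proper_card; apply/properP; split; first exact: subsetDl.
    by exists i; rewrite // inE iU.
  - by move=> t /su /sr.
  - by apply: agree_onU; [apply: sub_agree_on su hs | apply: agree_on_proj_class].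
apply: le_trans (size_proj_le_mul IHU) _.
rewrite (fan_out_boundID (H :\: Y) U) UY -HYU ler_wpM2r ?fan_out_bound_ge0 //.
apply: le_trans (hU s sr hs) _; rewrite ler_wpM2r ?powR_ge0 //.
rewrite -[X in X <= _]expr1 ler_eXn2l ?ltr1n // card_gt0.
by apply/set0Pn; exists i; rewrite -UY inE iHY iU.
Qed.

End FanOut.

Section HeavyPairs.
Variables (R : realType) (V : finType) (D : eqType).
Variables (Q : seq (relation V D)) (sigma : relation V D -> {set V} -> R) (p : nat).
Variable v : V -> R.

Local Notation H := (heavy_set Q sigma p v).

Lemma mem_heavy_pairs P : P \in heavy_pairs Q sigma p v ->
  [/\ P.2 \in Q, P.1 \subset rvars P.2 & heavy Q sigma p v P.2 P.1].
Proof.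
move=> /allpairsPdep [R0 [U [R0Q]]]; rewrite mem_filter => /andP [hv].
by rewrite mem_enum powersetE => sU ->.
Qed.

Hypothesis Q_wf : forall R0, R0 \in Q -> wf_relation R0.

Lemma heavy_relation_restr t P :
  t \in heavy_relation Q sigma p v -> P \in heavy_pairs Q sigma p v ->
  restr P.1 t \in proj P.1 (rtuples P.2).
Proof.
pose rs := [seq (P.1, proj P.1 (rtuples P.2)) | P <- heavy_pairs Q sigma p v].
have rs_schema P' : P' \in rs -> has_schema P'.1 P'.2.
  move=> /mapP [P'' /mem_heavy_pairs [R0Q sU _] ->] /=.
  exact: proj_schema (Q_wf R0Q) sU.
move=> tRH hP; apply: (mem_join_restr rs_schema) (map_f _ hP).
by rewrite -map_comp.
Qed.

Hypotheses (unif : uniformized Q sigma) (p_gt0 : (0 < p)%N).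
Hypothesis cons : consistent Q sigma p v.

Lemma deg_heavy_le R0 (U Y : {set V}) :
  R0 \in Q -> U \subset rvars R0 -> heavy Q sigma p v R0 U ->
  (deg (rtuples R0) U (U :&: Y))%:R <= 2 * p%:R `^ (\sum_(i in U :\: Y) v i).
Proof.
move=> R0Q sU hvU; have p_pos : 0 < p%:R :> R by rewrite ltr0n.
(* An empty R0 has degree 0; otherwise n > 0, which the ratio argument needs. *)
have [->|ne] := eqVneq (rtuples R0) [::].
  by rewrite /deg big_nil mulr_ge0 ?powR_ge0.
have n_pos : 0 < (input_size Q)%:R :> R by rewrite ltr0n (input_size_gt0 R0Q).
set a := \sum_(i in U :&: Y) v i; set b := \sum_(i in U :\: Y) v i.
have [_ sat] := unif R0Q.
apply: (ler_mul_of_ratio (c := (input_size Q)%:R / p%:R `^ a))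
  (sat _ _ (subsetIl U Y) sU) => //.
- by rewrite divr_gt0 ?powR_gt0.
- by rewrite powR_gt0.
- move: hvU; rewrite /heavy /threshold /wsum (big_setID Y).
  by rewrite powRD ?(gt_eqF p_pos) ?implybT // invfM mulrA.
- exact: cons.2 R0Q _ (subset_trans (subsetIl _ _) sU).
Qed.

Lemma heavy_local_fan_out : local_fan_out H (heavy_relation Q sigma p v) p%:R v.
Proof.
move=> Y i; rewrite inE => /andP [_ /bigcup_seqP [P hP iP]].
have [R0Q sU hvU] := mem_heavy_pairs hP.
exists P.1; split => // [|s sRH hs]; first exact: bigcup_seq_sup.
case: s sRH hs => [|t0 s] sRH hs; first by rewrite mulr_ge0 ?powR_ge0.
apply: le_trans (deg_heavy_le Y R0Q sU hvU); rewrite ler_nat.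
apply: (size_proj_le_deg (subsetIl _ _) (mem_head t0 s)).
  exact: sub_agree_on (subsetIr _ _) (fun _ => id) hs.
by move=> t /sRH tRH; apply: heavy_relation_restr tRH hP.
Qed.

End HeavyPairs.

Theorem lemma4p13 (R : realType) (V : finType) (D : eqType)
  (Q : seq (relation V D)) (sigma : relation V D -> {set V} -> R)
  (p : nat) (Delta : R) (vstar : {set V} -> V -> R) (psi : {set V} -> R) :
  is_query Q ->
  uniformized Q sigma ->
  (0 < p)%N ->
  0 < Delta ->
  vstar_spec Q vstar ->
  construct_returns Q sigma p Delta vstar psi ->
  consistent Q sigma p (scaled Delta vstar psi) ->
  let v := scaled Delta vstar psi in
  let H := heavy_set Q sigma p v in
  forall X : {set V}, X \subset H ->
    (deg (heavy_relation Q sigma p v) H X)%:R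
      <= 2 ^+ #|H| * (p%:R `^ (\sum_(i in H :\: X) v i)).
Proof.
move=> [_ Q_wf _] unif p_gt0 _ _ _ cons v H X sXH.
have p_pos : 0 < p%:R :> R by rewrite ltr0n.
have fan_out := heavy_local_fan_out Q_wf unif p_gt0 cons.
apply: natr_deg_le => [|t _]; first by rewrite mulr_ge0 ?exprn_ge0 ?powR_ge0.
apply: le_trans (size_proj_fan_out p_pos fan_out (Y := X) _ _) _.
- exact: proj_class_sub.
- exact: agree_on_proj_class.
rewrite /fan_out_bound ler_wpM2r ?powR_ge0 // ler_eXn2l ?ltr1n //.
exact/subset_leq_card/subsetDl.
Qed.
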